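(* Let $p\in(0,1)$ and let $(\lambda_n)_{n\ge1}$ be a sequence with $\lambda_1=1$ and $0\le\lambda_n\le\lambda_{n-1}$ for all $n>1$. Let $r_1,r_2,\dots$ be $\{0,1\}$-valued random variables with $\Pr(r_1=1)=p$ and, for every $n\ge2$, $\Pr(r_n=1\mid r_1,\dots,r_{n-1})=\lambda_n p+(1-\lambda_n)\bar p_{n-1}$, where $\bar p_m=\frac1m\sum_{i=1}^m r_i$. Then for every $n\ge2$, $\mathrm{Cov}[\bar p_{n-1},r_n]=(1-\lambda_n)\,\mathrm{Var}[\bar p_{n-1}]$. *)

From HB Require Import structures.
From mathcomp Require Import all_boot all_order all_algebra.
From mathcomp Require Import all_classical all_reals all_analysis.
Set Implicit Arguments. Unset Strict Implicit. Unset Printing Implicit Defensive.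
Import Order.TTheory GRing.Theory Num.Theory.
Local Open Scope classical_set_scope.
Local Open Scope ring_scope.

(* Random variables are indexed from 1: r 1, r 2, ... ; r 0 is unused. *)

Definition pbar {T : Type} {R : realType} (r : nat -> T -> R) (m : nat) : T -> R :=
  fun t => m%:R^-1 * \sum_(1 <= i < m.+1) r i t.

Definition hist_event {T : Type} {R : realType} (r : nat -> T -> R)
    (m : nat) (b : nat -> bool) : set T :=
  [set t | forall i, (1 <= i <= m)%N -> r i t = (b i)%:R].

Definition bmean {R : realType} (m : nat) (b : nat -> bool) : R :=
  m%:R^-1 * \sum_(1 <= i < m.+1) ((b i)%:R : R).

From HB Require Import structures.
From mathcomp Require Import all_boot all_order all_algebra.
From mathcomp Require Import all_classical all_reals all_analysis.
Set Implicit Arguments. Unset Strict Implicit. Unset Printing Implicit Defensive.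
Import Order.TTheory GRing.Theory Num.Theory.
Local Open Scope classical_set_scope.
Local Open Scope ring_scope.

(* Given the history r_1, ..., r_(n-1), the conditional mean of r_n is
   c + (1 - lam_n) pbar_(n-1) with c = lam_n p, an affine function of the
   history.  Hence r_n can be replaced by its conditional mean in any
   covariance with a function of the history, and
   Cov[pbar, c + (1 - lam_n) pbar] = (1 - lam_n) Var[pbar].  As the history
   takes finitely many values, the replacement is a finite sum over the atoms
   {r_1 = b_1, ..., r_(n-1) = b_(n-1)}. *)

Section covariance_shift.
Context d (T : measurableType d) (R : realType) (P : probability T R).

Lemma covarianceD_cst_r (X Y : T -> R) c : Y \in Lfun P 1 ->
  covariance P X (cst c \+ Y)%R = covariance P X Y.
Proof.
move=> Y1; rewrite !covariance.unlock expectationD ?Lfun_cst //.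
rewrite expectation_cst.
move: (expectation_fin_num Y1); case: ('E_P[Y])%E => [y _||] //.
congr expectation; apply/funext => t /=.
by rewrite mulrfctE /= opprD addrACA subrr add0r.
Qed.
End covariance_shift.

Section finite_partition.
Context d (T : measurableType d) (R : realType) (P : probability T R).
Context (S : finType) (h : T -> S).
Hypothesis mh : forall s, measurable (h @^-1` [set s]).

Lemma comp_indicE (f : S -> R) (A : set T) :
  (f \o h) * \1_A = \sum_(s : S) f s \o* \1_(h @^-1` [set s] `&` A).
Proof.
apply/funext => t; rewrite fct_sumE (bigD1 (h t)) //= big1 ?addr0.
  by rewrite /= !indicE in_setI mem_set // mulrC.
move=> s hts; rewrite indicE in_setI (_ : t \in _ = false) ?mul0r //.
by apply/negbTE/negP => /set_mem /= hs; rewrite hs eqxx in hts.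
Qed.

Lemma Lfun1_comp_indic (f : S -> R) (A : set T) : measurable A ->
  (f \o h) * \1_A \in Lfun P 1.
Proof.
move=> mA; rewrite comp_indicE rpred_sum // => s _.
apply: Lfun_scale => //; apply/Lfun1_integrable.
by apply: integrable_indic; exact: measurableI.
Qed.

Lemma Lfun1_comp (f : S -> R) : f \o h \in Lfun P 1.
Proof.
by have := Lfun1_comp_indic f (@measurableT _ T); rewrite indicT mulr1.
Qed.

Lemma expectation_comp_indic (f : S -> R) (A : set T) : measurable A ->
  ('E_P[(f \o h) * \1_A] = \sum_(s : S) (f s)%:E * P (h @^-1` [set s] `&` A))%E.
Proof.
move=> mA; have mhA s : measurable (h @^-1` [set s] `&` A).
  exact: measurableI.
have L1 s : \1_(h @^-1` [set s] `&` A) \in Lfun P 1.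
  by apply/Lfun1_integrable; exact: integrable_indic.
rewrite comp_indicE -big_enum -(big_map _ xpredT id) expectation_sum.
  rewrite big_map big_enum /=; apply: eq_bigr => s _.
  by rewrite expectationZl // expectation_indic.
by move=> _ /mapP[s _ ->]; exact: Lfun_scale.
Qed.

Section conditional_indicator.
Variables (A : set T) (g : S -> R).
Hypothesis mA : measurable A.
(* [g (h t)] is the conditional probability of [A] given [h]. *)
Hypothesis PhA :
  forall s, P (h @^-1` [set s] `&` A) = ((g s)%:E * P (h @^-1` [set s]))%E.

Lemma expectation_comp_indic_cond (f : S -> R) :
  ('E_P[(f \o h) * \1_A] = 'E_P[(f \o h) * (g \o h)])%E.
Proof.
have -> : (f \o h) * (g \o h) = ((f * g) \o h) * \1_setT.
  by apply/funext => t; rewrite !mulrfctE /= indicE in_setT mulr1.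
rewrite (expectation_comp_indic f mA).
rewrite (expectation_comp_indic (f * g) (@measurableT _ T)).
by apply: eq_bigr => s _; rewrite setIT PhA mulrfctE EFinM muleA.
Qed.

Lemma covariance_comp_indic_cond (f : S -> R) :
  covariance P (f \o h) \1_A = covariance P (f \o h) (g \o h).
Proof.
have indicA : \1_A = ((cst 1 : S -> R) \o h) * \1_A.
  by apply/funext => t; rewrite mulrfctE /= mul1r.
have gh : g \o h = ((cst 1 : S -> R) \o h) * (g \o h).
  by apply/funext => t; rewrite mulrfctE /= mul1r.
rewrite !covarianceE ?Lfun1_comp ?(Lfun1_comp (f * g)) ?Lfun1_comp_indic //.
  rewrite expectation_comp_indic_cond [in ('E_P[\1_A])%E]indicA.
  by rewrite [in ('E_P[g \o h])%E]gh expectation_comp_indic_cond.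
by rewrite indicA; exact: Lfun1_comp_indic.
Qed.
End conditional_indicator.
End finite_partition.

Section history.
Context d (T : measurableType d) (R : realType) (r : nat -> T -> R).
Hypothesis mr : forall i, measurable_fun setT (r i).
Hypothesis r01 : forall i t, r i t = 0 \/ r i t = 1.

Definition history (m : nat) (t : T) : m.-tuple bool :=
  [tuple r i.+1 t == 1 | i < m].

Definition tuple_pattern {m} (s : m.-tuple bool) : nat -> bool :=
  fun i => nth false s i.-1.

Lemma nth_history m t i : (0 < i <= m)%N ->
  nth false (history m t) i.-1 = (r i t == 1).
Proof.
case/andP=> i_gt0 i_le_m; have lt_im : (i.-1 < m)%N by rewrite prednK.
rewrite -[i.-1 in LHS]/(nat_of_ord (Ordinal lt_im)) -tnth_nth.
by rewrite tnth_mktuple /= prednK.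
Qed.

Lemma r_bitE i t : r i t = (r i t == 1)%:R.
Proof. by case: (r01 i t) => ->; rewrite ?eqxx // eq_sym oner_eq0. Qed.

Lemma r_indicE i : r i = \1_[set t | r i t = 1].
Proof.
apply/funext => t; rewrite indicE [LHS]r_bitE.
congr (_%:R); have [rt1|rt1] := eqVneq (r i t) 1; first by rewrite mem_set.
by rewrite memNset //= => /eqP; rewrite (negbTE rt1).
Qed.

Lemma hist_event_measurable k b : measurable (hist_event r k b).
Proof.
have -> : hist_event r k b =
    \bigcap_(i in [set i | (0 < i <= k)%N]) (r i @^-1` [set (b i)%:R]) by [].
apply: fin_bigcap_measurable => [|i _].
  by apply: (sub_finite_set _ (finite_II k.+1)) => i /andP[].
by rewrite -[X in measurable X]setTI; apply: mr => //; exact: measurable_set1.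
Qed.

Lemma hist_event_patternE m s :
  hist_event r m (tuple_pattern s) = history m @^-1` [set s].
Proof.
apply/seteqP; split => t /= H.
  apply: eq_from_tnth => j; rewrite tnth_mktuple (tnth_nth false).
  have /= -> : r j.+1 t = (tuple_pattern s j.+1)%:R.
    by apply: H; rewrite /= ltn_ord.
  rewrite /tuple_pattern /=.
  by case: (nth false s j); rewrite ?eqxx // eq_sym oner_eq0.
move=> i i_range; rewrite /tuple_pattern -H nth_history //.
exact: r_bitE.
Qed.

Lemma pbar_history m : pbar r m = (bmean m \o @tuple_pattern m) \o history m.
Proof.
apply/funext => t; rewrite /pbar /bmean /=; congr (_ * _).
apply: eq_big_nat => i; rewrite ltnS => i_range.
by rewrite /tuple_pattern nth_history //; exact: r_bitE.
Qed.
End history.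

Theorem lemmaA3 (d : measure_display) (T : measurableType d) (R : realType)
  (P : probability T R) (p : R) (lam : nat -> R) (r : nat -> T -> R) :
  0 < p < 1 ->
  lam 1%N = 1 ->
  (forall n, (1 < n)%N -> 0 <= lam n <= lam n.-1) ->
  (forall i, measurable_fun setT (r i)) ->
  (forall i t, r i t = 0 \/ r i t = 1) ->
  P [set t | r 1%N t = 1] = p%:E ->
  (forall (n : nat) (b : nat -> bool), (2 <= n)%N ->
     P (hist_event r n.-1 b `&` [set t | r n t = 1]) =
       ((lam n * p + (1 - lam n) * bmean n.-1 b)%:E * P (hist_event r n.-1 b))%E) ->
  forall n : nat, (2 <= n)%N ->
    covariance P (pbar r n.-1) (r n) = ((1 - lam n)%:E * variance P (pbar r n.-1))%E.
Proof.
move=> _ _ _ mr r01 _ cond n n_ge2.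
pose h := history r n.-1; pose f := @bmean R n.-1 \o @tuple_pattern n.-1.
pose g s := lam n * p + (1 - lam n) * f s.
have mh s : measurable (h @^-1` [set s]).
  by rewrite -hist_event_patternE //; exact: hist_event_measurable.
have mA : measurable [set t | r n t = 1].
  by have := mr n measurableT _ (measurable_set1 1); rewrite setTI.
have condA s : P (h @^-1` [set s] `&` [set t | r n t = 1]) =
    ((g s)%:E * P (h @^-1` [set s]))%E.
  by rewrite -hist_event_patternE //; exact: cond.
have g_affine : g \o h = (cst (lam n * p) \+ (1 - lam n) \o* (f \o h))%R.
  by apply/funext => t; rewrite /g /= (mulrC (1 - lam n)).
rewrite (pbar_history r01) (r_indicE r01).
rewrite (covariance_comp_indic_cond mh mA condA) g_affine.
rewrite covarianceD_cst_r ?Lfun_scale ?(Lfun1_comp P mh) //.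
by rewrite covarianceZr ?(Lfun1_comp P mh) //; exact: (Lfun1_comp P mh (f * f)).
Qed.
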